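(* Let $\tau$ be a self-similar tile set. Then every $\tau$-tiling of the plane is aperiodic, i.e., no $\tau$-tiling $U$ admits a nonzero vector $T\in\mathbb{Z}^2$ with $U(x+T)=U(x)$ for all $x\in\mathbb{Z}^2$.
   Context: Fix a finite set $C$ of colors. A tile is an element of $C^4$ (its left, right, top and bottom colors); a tile set is a finite subset $\tau\subset C^4$. A $\tau$-tiling (of the plane) is a map $U\colon\mathbb{Z}^2\to\tau$ such that for every $(x,y)$ the right color of $U(x,y)$ equals the left color of $U(x+1,y)$ and the top color of $U(x,y)$ equals the bottom color of $U(x,y+1)$; a tiling of a finite region is defined the same way, requiring matching only for adjacent cells inside the region. For a tile set $\tau$ and an integer $N>1$, an $N\times N$ macro-tile is a $\tau$-tiling of an $N\times N$ square; its right (left, top, bottom) macro-color is the sequence of the $N$ right (left, top, bottom) colors of the tiles along its right (left, top, bottom) side. A simulation of a tile set $\rho$ by a tile set $\tau$ with zoom factor $N>1$ is a map $S$ from $\rho$ to $N\times N$ $\tau$-macro-tiles such that: (i) $S$ is injective; (ii) for all $r_1,r_2\in\rho$, the right color of $r_1$ equals the left color of $r_2$ iff the right macro-color of $S(r_1)$ equals the left macro-color of $S(r_2)$, and similarly for top/bottom; (iii) every $\tau$-tiling of the plane can be split by horizontal and vertical lines into $N\times N$ macro-tiles all belonging to the range of $S$, and this splitting is unique. A tile set is self-similar if it simulates itself (with some zoom factor $N>1$). *)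

From HB Require Import structures.
From mathcomp Require Import all_boot all_order all_algebra.
Set Implicit Arguments. Unset Strict Implicit. Unset Printing Implicit Defensive.
Import GRing.Theory Num.Theory.
Local Open Scope ring_scope.

Definition tile (C : finType) : finType := (C * C * C * C)%type.
Definition tleft   (C : finType) (t : tile C) : C := t.1.1.1.
Definition tright  (C : finType) (t : tile C) : C := t.1.1.2.
Definition ttop    (C : finType) (t : tile C) : C := t.1.2.
Definition tbottom (C : finType) (t : tile C) : C := t.2.

Definition is_tiling (C : finType) (tau : {set tile C}) (U : int -> int -> tile C) : Prop :=
  forall x y : int,
    [/\ U x y \in tau,
        tright (U x y) = tleft (U (x + 1) y)
      & ttop (U x y) = tbottom (U x (y + 1))].

(* An N x N array of tiles, indexed (column x, row y), x to the right, y up. *)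
Definition macro (C : finType) (N : nat) := {ffun 'I_N * 'I_N -> tile C}.

Definition is_macro_tile (C : finType) (tau : {set tile C}) (N : nat) (M : macro C N) : Prop :=
  (forall p, M p \in tau) /\
  (forall x x' y : 'I_N, (x' : nat) = (x.+1)%N -> tright (M (x, y)) = tleft (M (x', y))) /\
  (forall x y y' : 'I_N, (y' : nat) = (y.+1)%N -> ttop (M (x, y)) = tbottom (M (x, y'))).

(* Cells are enumerated
   in the (lexicographic) order of enum ('I_N * 'I_N); on a vertical side this
   lists the cells by increasing y, on a horizontal side by increasing x, so
   opposite sides are listed in corresponding order. *)
Definition rmacro (C : finType) (N : nat) (M : macro C N) : seq C :=
  [seq tright (M p) | p <- enum [pred p : 'I_N * 'I_N | (p.1.+1 == N)%N]].
Definition lmacro (C : finType) (N : nat) (M : macro C N) : seq C :=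
  [seq tleft (M p) | p <- enum [pred p : 'I_N * 'I_N | ((p.1 : nat) == 0)%N]].
Definition tmacro (C : finType) (N : nat) (M : macro C N) : seq C :=
  [seq ttop (M p) | p <- enum [pred p : 'I_N * 'I_N | (p.2.+1 == N)%N]].
Definition bmacro (C : finType) (N : nat) (M : macro C N) : seq C :=
  [seq tbottom (M p) | p <- enum [pred p : 'I_N * 'I_N | ((p.2 : nat) == 0)%N]].

Definition block (C : finType) (N : nat) (U : int -> int -> tile C)
    (a b : 'I_N) (i j : int) : macro C N :=
  [ffun p : 'I_N * 'I_N =>
     U (a%:Z + N%:Z * i + (p.1)%:Z) (b%:Z + N%:Z * j + (p.2)%:Z)].

Definition simulation (C' C : finType) (rho : {set tile C'}) (tau : {set tile C})
    (N : nat) (S : tile C' -> macro C N) : Prop :=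
  [/\ (1 < N)%N,
      (forall r, r \in rho -> is_macro_tile tau (S r)),
      {in rho &, injective S},
      (forall r1 r2, r1 \in rho -> r2 \in rho ->
         (tright r1 = tleft r2 <-> rmacro (S r1) = lmacro (S r2)) /\
         (ttop r1 = tbottom r2 <-> tmacro (S r1) = bmacro (S r2)))
    & (forall U, is_tiling tau U ->
         exists! ab : 'I_N * 'I_N,
           forall i j : int, exists2 r, r \in rho & block U ab.1 ab.2 i j = S r)].

Arguments simulation {C' C} rho tau N S.

Definition self_similar (C : finType) (tau : {set tile C}) : Prop :=
  exists N (S : tile C -> macro C N), simulation tau tau N S.

From mathcomp Require Import all_boot all_order all_algebra.
From mathcomp Require Import zify.
Set Implicit Arguments. Unset Strict Implicit. Unset Printing Implicit Defensive.
Import GRing.Theory Num.Theory.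
Local Open Scope ring_scope.

(* Let S be a simulation of rho by tau with zoom factor N, and let U be a
   tau-tiling with period t = (t1, t2).  U splits into macro-tiles of the
   range of S along a grid with offset (a, b).  Translating U by t gives the
   same tiling, hence a splitting with offset (a, b) + t reduced mod N; by
   uniqueness of the splitting, N divides t1 and t2.  Reading off the rho-tile
   under each macro-tile ("decoding" U) gives a rho-tiling which, by
   injectivity of S, has period t / N.

   For a self-similar tau (rho = tau) this descent can be iterated: N^k
   divides t for every k, so t = 0.  The file first computes the macro-colors
   of a macro-tile as explicit columns and rows, then shows that adjacent
   blocks of a tiling have matching macro-colors and that a period translates
   blocks, then proves the descent step for an arbitrary simulation, and
   finally iterates it. *)

Lemma enum_filter {T : finType} (A : {pred T}) : enum A = [seq x <- enum T | x \in A].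
Proof. by rewrite enumT /enum_mem. Qed.

Lemma enum_prod_filter (T1 T2 : finType) (P : {pred T1 * T2}) :
  enum P = [seq p <- prod_enum T1 T2 | p \in P].
Proof. by rewrite /enum_mem unlock. Qed.

Lemma enum_predX (T1 T2 : finType) (A1 : {pred T1}) (A2 : {pred T2}) :
  enum [pred p : T1 * T2 | (p.1 \in A1) && (p.2 \in A2)] =
  [seq (x, y) | x <- enum A1, y <- enum A2].
Proof.
rewrite enum_prod_filter (enum_filter A1) (enum_filter A2) /prod_enum.
elim: (enum T1) => //= x s IH; rewrite filter_cat IH filter_map.
case: ifP => xA1 /=; last first.
  by rewrite (@eq_filter _ _ pred0) ?filter_pred0 // => y; rewrite !inE /= xA1.
by congr (map _ _ ++ _); apply: eq_filter => y; rewrite !inE /= xA1.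
Qed.

Lemma enum_column (T1 T2 : finType) (x0 : T1) (P : {pred T1 * T2}) :
  P =i [pred p | p.1 == x0] -> enum P = [seq (x0, y) | y <- enum T2].
Proof.
move=> P_line; rewrite (eq_enum (B := [pred p : T1 * T2 | (p.1 \in pred1 x0) && (p.2 \in T2)])).
  by rewrite enum_predX enum1 allpairs1l.
by move=> p; rewrite P_line !inE andbT.
Qed.

Lemma enum_row (T1 T2 : finType) (y0 : T2) (P : {pred T1 * T2}) :
  P =i [pred p | p.2 == y0] -> enum P = [seq (x, y0) | x <- enum T1].
Proof.
move=> P_line; rewrite (eq_enum (B := [pred p : T1 * T2 | (p.1 \in T1) && (p.2 \in pred1 y0)])).
  by rewrite enum_predX enum1 allpairs1r.
by move=> p; rewrite P_line !inE.
Qed.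

Section MacroColors.
Variables (C : finType) (n : nat) (M : macro C n.+1).

Lemma rmacro_last_column : rmacro M = [seq tright (M (ord_max, y)) | y <- enum 'I_n.+1].
Proof. by rewrite /rmacro (enum_column (x0 := ord_max)) -?map_comp. Qed.

Lemma lmacro_first_column : lmacro M = [seq tleft (M (ord0, y)) | y <- enum 'I_n.+1].
Proof. by rewrite /lmacro (enum_column (x0 := ord0)) -?map_comp. Qed.

Lemma tmacro_top_row : tmacro M = [seq ttop (M (x, ord_max)) | x <- enum 'I_n.+1].
Proof. by rewrite /tmacro (enum_row (y0 := ord_max)) -?map_comp. Qed.

Lemma bmacro_bottom_row : bmacro M = [seq tbottom (M (x, ord0)) | x <- enum 'I_n.+1].
Proof. by rewrite /bmacro (enum_row (y0 := ord0)) -?map_comp. Qed.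

End MacroColors.

Definition periodic (T : Type) (U : int -> int -> T) (t1 t2 : int) : Prop :=
  forall x y : int, U (x + t1) (y + t2) = U x y.

Section Blocks.
Variables (C : finType) (n : nat) (U : int -> int -> tile C).
Local Notation N := n.+1.

Lemma block_right_adjacent (tau : {set tile C}) :
  is_tiling tau U -> forall (a b : 'I_N) (i j : int),
  rmacro (block U a b i j) = lmacro (block U a b (i + 1) j).
Proof.
move=> tilingU a b i j; rewrite rmacro_last_column lmacro_first_column.
apply: eq_map => y; rewrite !ffunE /=.
have [_ -> _] := tilingU (a%:Z + N%:Z * i + n%:Z) (b%:Z + N%:Z * j + y).
by congr (tleft (U _ _)); lia.
Qed.

Lemma block_top_adjacent (tau : {set tile C}) :
  is_tiling tau U -> forall (a b : 'I_N) (i j : int),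
  tmacro (block U a b i j) = bmacro (block U a b i (j + 1)).
Proof.
move=> tilingU a b i j; rewrite tmacro_top_row bmacro_bottom_row.
apply: eq_map => x; rewrite !ffunE /=.
have [_ _ ->] := tilingU (a%:Z + N%:Z * i + x) (b%:Z + N%:Z * j + n%:Z).
by congr (tbottom (U _ _)); lia.
Qed.

Lemma block_translate (t1 t2 q1 q2 : int) (a b a' b' : 'I_N) :
  periodic U t1 t2 ->
  a'%:Z + N%:Z * q1 = a%:Z + t1 -> b'%:Z + N%:Z * q2 = b%:Z + t2 ->
  forall i j : int, block U a' b' (i + q1) (j + q2) = block U a b i j.
Proof.
move=> perU ha hb i j; apply/ffunP => p; rewrite !ffunE -[RHS]perU.
by congr (U _ _); lia.
Qed.

End Blocks.

Lemma residue (n : nat) (m : int) : exists (r : 'I_n.+1) (q : int), r%:Z + n.+1%:Z * q = m.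
Proof.
have r_lt : (`|(m %% n.+1%:Z)%Z| < n.+1)%N.
  by rewrite -ltz_nat gez0_abs ?modz_ge0 ?ltz_pmod.
exists (Ordinal r_lt), (m %/ n.+1%:Z)%Z.
by rewrite /= gez0_abs ?modz_ge0 // addrC mulrC -divz_eq.
Qed.

Section Simulation.
Variables (C' C : finType) (rho : {set tile C'}) (tau : {set tile C}) (n : nat).
Variables (S : tile C' -> macro C n.+1) (simS : simulation rho tau n.+1 S).
Local Notation N := n.+1.

Definition splits (U : int -> int -> tile C) (a b : 'I_N) : Prop :=
  forall i j : int, exists2 r, r \in rho & block U a b i j = S r.

Definition decoding (U : int -> int -> tile C) (a b : 'I_N) (V : int -> int -> tile C') :
  Prop := forall i j : int, V i j \in rho /\ block U a b i j = S (V i j).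

Lemma exists_decoding U a b : splits U a b -> exists V, decoding U a b V.
Proof.
move=> splitU; have [r0 _ _] := splitU 0 0.
exists (fun i j => odflt r0 [pick r in rho | block U a b i j == S r]) => i j.
case: pickP => [r /andP[rho_r /eqP ->] | noS] //=.
by have [r rho_r blockE] := splitU i j; move: (noS r); rewrite rho_r blockE eqxx.
Qed.

(* The decoding of a tau-tiling is a rho-tiling: matching macro-colors of
   adjacent blocks force matching colors of the decoded tiles. *)
Lemma decoding_tiling U a b V :
  is_tiling tau U -> decoding U a b V -> is_tiling rho V.
Proof.
have [_ _ _ colorsS _] := simS.
move=> tilingU decV i j; have [rho_ij Eij] := decV i j.
have [rho_r Er] := decV (i + 1) j; have [rho_t Et] := decV i (j + 1).
split => //.
- by apply/(proj1 (colorsS _ _ rho_ij rho_r)); rewrite -Eij -Er (block_right_adjacent tilingU).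
- by apply/(proj2 (colorsS _ _ rho_ij rho_t)); rewrite -Eij -Et (block_top_adjacent tilingU).
Qed.

(* A period (N q1, N q2) of U descends, by injectivity of S, to the period
   (q1, q2) of its decoding. *)
Lemma decoding_periodic U a b V (q1 q2 : int) :
  periodic U (N%:Z * q1) (N%:Z * q2) -> decoding U a b V -> periodic V q1 q2.
Proof.
have [_ _ injS _ _] := simS.
move=> perU decV i j; apply: injS; [exact: (decV _ _).1 | exact: (decV _ _).1 |].
by rewrite -(decV _ _).2 -(decV _ _).2 (block_translate (a := a) (b := b) perU).
Qed.

(* Uniqueness of the splitting: every period of a tau-tiling is divisible by N. *)
Lemma period_multiple U (t1 t2 : int) :
  is_tiling tau U -> periodic U t1 t2 ->
  exists q1 q2 : int, t1 = N%:Z * q1 /\ t2 = N%:Z * q2.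
Proof.
have [_ _ _ _ uniqS] := simS.
move=> tilingU perU; have [[a b] [/= splitU uniq_ab]] := uniqS U tilingU.
have [a' [q1 Ea]] := residue n (a%:Z + t1).
have [b' [q2 Eb]] := residue n (b%:Z + t2).
have split' : splits U a' b'.
  move=> i j; rewrite -(subrK q1 i) -(subrK q2 j) (block_translate perU Ea Eb).
  exact: splitU.
case: (uniq_ab (a', b') split') => ea eb.
by exists q1, q2; move: Ea Eb; rewrite -ea -eb; split; lia.
Qed.

Lemma periodic_descent U (t1 t2 : int) :
  is_tiling tau U -> periodic U t1 t2 ->
  exists q1 q2 (V : int -> int -> tile C'),
    [/\ is_tiling rho V, t1 = N%:Z * q1, t2 = N%:Z * q2 & periodic V q1 q2].
Proof.
have [_ _ _ _ uniqS] := simS.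
move=> tilingU perU; have [q1 [q2 [E1 E2]]] := period_multiple tilingU perU.
have [[a b] [splitU _]] := uniqS U tilingU.
have [V decV] := exists_decoding splitU.
exists q1, q2, V; split => //; first exact: decoding_tiling decV.
by apply: decoding_periodic decV; rewrite -E1 -E2.
Qed.

End Simulation.

Lemma self_similar_period_dvd (C : finType) (tau : {set tile C}) (n : nat)
    (S : tile C -> macro C n.+1) (k : nat) :
  simulation tau tau n.+1 S ->
  forall U t1 t2, is_tiling tau U -> periodic U t1 t2 ->
  (n.+1%:Z ^+ k %| t1)%Z && (n.+1%:Z ^+ k %| t2)%Z.
Proof.
move=> simS; elim: k => [|k IHk] U t1 t2 tilingU perU; first by rewrite expr0 !dvd1z.
have [q1 [q2 [V [tilingV -> -> perV]]]] := periodic_descent simS tilingU perU.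
have /andP[dvd_q1 dvd_q2] := IHk V q1 q2 tilingV perV.
by rewrite exprS !dvdz_mul.
Qed.

Lemma dvdz_expn_small (m k : nat) (t : int) :
  (1 < m)%N -> (m%:Z ^+ k %| t)%Z -> (`|t| <= k)%N -> t = 0.
Proof.
move=> m_gt1; rewrite dvdzE abszX absz_nat => dvd_t t_le.
apply/eqP; rewrite -absz_eq0 -leqn0; apply: contraLR t_le; rewrite -!ltnNge => t_gt0.
exact: leq_trans (ltn_expl k m_gt1) (dvdn_leq t_gt0 dvd_t).
Qed.

Theorem mainTheorem1 (C : finType) (tau : {set tile C}) :
  self_similar tau ->
  forall U : int -> int -> tile C, is_tiling tau U ->
  forall t1 t2 : int, (t1, t2) != (0, 0) ->
  ~ (forall x y : int, U (x + t1) (y + t2) = U x y).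
Proof.
move=> [[|n] [S simS]] U tilingU t1 t2 t_neq0 perU; first by case: simS.
have zoom_gt1 : (1 < n.+1)%N by case: simS.
pose k := (`|t1| + `|t2|)%N.
have /andP[dvd1 dvd2] := self_similar_period_dvd k simS tilingU perU.
have t1_0 := dvdz_expn_small zoom_gt1 dvd1 (leq_addr _ _).
have t2_0 := dvdz_expn_small zoom_gt1 dvd2 (leq_addl _ _).
by move: t_neq0; rewrite t1_0 t2_0 eqxx.
Qed.
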